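(* Assume (a) and (b). For all $P\in\triangle_Q(\mathcal{M})$, $$G\big(z,P,P^{(Q,\lambda)}_{\Theta|Z=z}\big)=\lambda\int\Big(1-\frac{dP}{dP^{(Q,\lambda)}_{\Theta|Z=z}}(\theta)\Big)\Big(f\Big(\frac{dP^{(Q,\lambda)}_{\Theta|Z=z}}{dQ}(\theta)\Big)+f^*\Big(-\frac{L_z(\theta)+N_{Q,z}(\lambda)}{\lambda}\Big)\Big)dQ(\theta).$$
   Context: Setting. - $\mathcal{M}\subseteq\mathbb{R}^d$; $h:\mathcal{M}\times\mathcal{X}\to\mathcal{Y}$; the loss $\ell:\mathcal{Y}\times\mathcal{Y}\to[0,\infty)$ satisfies $\ell(y,y)=0$. - For a dataset $z=((x_1,y_1),\dots,(x_n,y_n))$, $L_z(\theta)=\frac1n\sum_i\ell(h(\theta,x_i),y_i)$ and $R_z(P)=\int L_z\,dP$. - $G(z,P_1,P_2)=R_z(P_1)-R_z(P_2)$. - $Q$ is a Borel probability measure on $\mathcal{M}$, and $\triangle_Q(\mathcal{M})$ is the set of Borel probability measures $P\ll Q$. Fix $\lambda>0$. - $f:[0,\infty)\to\mathbb{R}$ is convex with $f(1)=0$; $D_f(P\|Q)=\int f(\frac{dP}{dQ})dQ$. - $\dot f$ is the derivative of $f$ on $(0,\infty)$ and $\dot f^{-1}$ its inverse. - $f^*(t)=\sup_x(tx-f(x))$ is the Legendre–Fenchel transform. Assumptions. - (a) $f$ is strictly convex and differentiable. - (b) There exists $\beta$ with $\dot f^{-1}\big(-\frac{\beta+L_z(\theta)}{\lambda}\big)>0$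 on $\operatorname{supp}Q$ and $\int\dot f^{-1}\big(-\frac{\beta+L_z(\theta)}{\lambda}\big)dQ=1$. Normalization and solution. $N_{Q,z}(\lambda)$ denotes this $\beta$ (the normalization function). $P^{(Q,\lambda)}_{\Theta|Z=z}$ is the unique minimizer of $R_z(P)+\lambda D_f(P\|Q)$ over $\triangle_Q(\mathcal{M})$. It satisfies $\frac{dP^{(Q,\lambda)}_{\Theta|Z=z}}{dQ}(\theta)=\dot f^{-1}\big(-\frac{N_{Q,z}(\lambda)+L_z(\theta)}{\lambda}\big)$ for $\theta\in\operatorname{supp}Q$, and it is mutually absolutely continuous with $Q$. *)

From HB Require Import structures.
From mathcomp Require Import all_boot all_order all_algebra.
From mathcomp Require Import all_classical all_reals all_analysis.
Set Implicit Arguments. Unset Strict Implicit. Unset Printing Implicit Defensive.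
Import Order.TTheory GRing.Theory Num.Theory.
Import numFieldNormedType.Exports.
Local Open Scope classical_set_scope.
Local Open Scope ring_scope.

Section defs.
Variable R : realType.

Definition emp_risk (P X Y : Type) (h : P -> X -> Y) (loss : Y -> Y -> R)
  (n : nat) (z : 'I_n -> X * Y) (theta : P) : R :=
  (n%:R)^-1 * \sum_(i < n) loss (h theta (z i).1) (z i).2.

Definition convex_nonneg (f : R -> R) : Prop :=
  forall x y t : R, 0 <= x -> 0 <= y -> 0 <= t <= 1 ->
    f (t * x + (1 - t) * y) <= t * f x + (1 - t) * f y.

Definition strictly_convex_nonneg (f : R -> R) : Prop :=
  forall x y t : R, 0 <= x -> 0 <= y -> x != y -> 0 < t < 1 ->
    f (t * x + (1 - t) * y) < t * f x + (1 - t) * f y.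

Definition differentiable_pos (f : R -> R) : Prop :=
  forall x : R, 0 < x -> derivable f x 1.

(* \dot f^{-1}(y): the (unique, by strict convexity) x > 0 with \dot f x = y;
   defaults to 0 when no such x exists *)
Definition fdot_inv (f : R -> R) (y : R) : R :=
  xget 0 [set x : R | 0 < x /\ derive1 f x = y].

Definition fstar (f : R -> R) (t : R) : \bar R :=
  ereal_sup [set ((t * x - f x)%:E) | x in [set x : R | 0 <= x]].

Definition msupp (dim : nat) (Q : set (dim.-tuple R) -> \bar R)
  : set (dim.-tuple R) :=
  [set th | forall e : R, 0 < e ->
     (0 < Q [set x | forall i : 'I_dim, (`|tnth x i - tnth th i| < e)%R])%E].

End defs.

From HB Require Import structures.
From mathcomp Require Import all_boot all_order all_algebra.
From mathcomp Require Import all_classical all_reals all_analysis.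
From mathcomp Require Import measurable_realfun ring lra.
Import Order.TTheory GRing.Theory Num.Theory.
Import numFieldNormedType.Exports.
Local Open Scope classical_set_scope.
Local Open Scope ring_scope.
Local Open Scope charge_scope.
Set Implicit Arguments. Unset Strict Implicit. Unset Printing Implicit Defensive.

(* At Q-almost every th the density g = dPstar/dQ is positive and, by (b), solves
   f'(g th) = t th with t th = -(L_z th + beta) / lam, so the Fenchel-Young equality
   f (g th) + f^*(t th) = t th * g th holds.  With r = dP/dPstar and the chain rule
   dP/dQ = r g, the integrand becomes t (g - dP/dQ) = lam^-1 (L_z + beta) (dP/dQ - g),
   whose Q-integral is lam^-1 ((R_z(P) + beta) - (R_z(Pstar) + beta)) because P and
   Pstar are probabilities.  Convexity enters through the tangent-line inequality,
   which gives Fenchel-Young and, with strict convexity and Darboux's theorem, shows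
   that f' maps (0, +oo) increasingly onto an interval: this makes g measurable. *)

Section one_sided_derivative_bounds.
Variable R : realType.
Implicit Types (f : R -> R) (c v s e : R).

Lemma derive_derive1 f c v : derivable f c 1 -> 'D_v f c = v * derive1 f c.
Proof. by move=> /derivable1_diffP df; rewrite deriveE // diff1E. Qed.

Lemma derivable1_derivable f c v : derivable f c 1 -> derivable f c v.
Proof. by move=> /derivable1_diffP df; exact: diff_derivable. Qed.

Lemma derive_ge_quotient f c v s e : derivable f c v -> 0 < e ->
  (forall h, 0 < h < e -> s * h <= f (h * v + c) - f c) -> s <= 'D_v f c.
Proof.
move=> dfc e0 sh; rewrite /derive cvg_at_rightE //; apply: limr_ge.
  rewrite -(cvg_at_rightE (fun h => h^-1 *: ((f \o shift c) (h *: v) - f c))) //.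
  apply: cvg_trans dfc; apply: cvg_app => A [r r0 Ar].
  by exists r => // x xr x0; apply: Ar => //; exact: lt0r_neq0.
near=> h; have h0 : 0 < h by near: h; exact: nbhs_right_gt.
have he : h < e by near: h; exact: nbhs_right_lt.
by rewrite /= ler_pdivlMl // mulrC; apply: sh; rewrite h0 he.
Unshelve. all: by end_near. Qed.

Lemma derive_le_quotient f c v s e : derivable f c v -> 0 < e ->
  (forall h, 0 < h < e -> f (h * v + c) - f c <= s * h) -> 'D_v f c <= s.
Proof.
move=> dfc e0 sh; rewrite -lerN2 -deriveN //.
apply: (derive_ge_quotient (derivableN dfc) e0) => h /sh; rewrite !fctE; lra.
Qed.

End one_sided_derivative_bounds.
Arguments derivable1_derivable {R f c} v.

Lemma darboux (R : realType) (f : R -> R) a b v : a < b ->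
  (forall x, a <= x <= b -> derivable f x 1) ->
  derive1 f a < v < derive1 f b -> exists2 c, a < c < b & derive1 f c = v.
Proof.
move=> ab df /andP[av vb]; pose k u := f u - v * u.
have kc : {within `[a, b], continuous k}.
  apply: continuous_in_subspaceT => u; rewrite inE /= in_itv /= => /df dfu.
  apply: continuousB; last by apply: continuousM; [exact: cvg_cst|exact: cvg_id].
  exact/differentiable_continuous/derivable1_diffP.
have [c] := EVT_min (ltW ab) kc; rewrite in_itv /= => /andP[ac cb] cmin.
have kmin h : a <= h + c <= b -> v * h <= f (h + c) - f c.
  by move=> hc; have := cmin (h + c); rewrite in_itv /= hc /k => /(_ isT); lra.
have dfc : derivable f c 1 by apply: df; rewrite ac cb.
have right_ge : c < b -> v <= derive1 f c.
  move=> cb'; rewrite derive1E.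
  apply: (derive_ge_quotient dfc (_ : 0 < b - c)); first by rewrite subr_gt0.
  by move=> h /andP[h0 hb]; rewrite mulr1; apply: kmin; apply/andP; split; lra.
have left_le : a < c -> derive1 f c <= v.
  move=> ac'; suff : - v <= 'D_(-1) f c by rewrite derive_derive1 //; lra.
  apply: (derive_ge_quotient (derivable1_derivable _ dfc) (_ : 0 < c - a)).
    by rewrite subr_gt0.
  move=> h /andP[h0 ha]; rewrite mulrN1.
  have /kmin : a <= - h + c <= b by apply/andP; split; lra.
  by rewrite mulrN mulNr.
have ac' : a < c.
  rewrite lt_neqAle ac andbT; apply/eqP => ea.
  by move: right_ge; rewrite -ea => /(_ ab); lra.
have cb' : c < b.
  rewrite lt_neqAle cb andbT; apply/eqP => eb.
  by move: left_le; rewrite eb => /(_ ab); lra.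
by exists c; [rewrite ac' cb'|apply/le_anti; rewrite left_le // right_ge].
Qed.

Section convex_derivative.
Variables (R : realType) (f : R -> R).

Lemma fdot_inv_ge0 y : 0 <= fdot_inv f y.
Proof. by rewrite /fdot_inv; case: xgetP => // x _ [/ltW]. Qed.

Lemma derive1_fdot_inv y : 0 < fdot_inv f y -> derive1 f (fdot_inv f y) = y.
Proof. by rewrite /fdot_inv; case: xgetP => [x _ []//|_]; rewrite ltxx. Qed.

Hypothesis f_convex : convex_nonneg f.
Hypothesis f_derivable : differentiable_pos f.

Lemma convex_tangent x y : 0 < x -> 0 <= y -> f x + derive1 f x * (y - x) <= f y.
Proof.
move=> x0 y0; have dfx := f_derivable x0.
suff : 'D_(y - x) f x <= f y - f x by rewrite derive_derive1 //; lra.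
apply: (derive_le_quotient (derivable1_derivable _ dfx) ltr01) => t /andP[t0 t1].
have t01 : 0 <= t <= 1 by rewrite !ltW.
have := f_convex y0 (ltW x0) t01.
by rewrite (_ : t * y + (1 - t) * x = t * (y - x) + x); [lra|ring].
Qed.

Lemma fenchel_young_derive1 x : 0 < x ->
  ((f x)%:E + fstar f (derive1 f x) = (derive1 f x * x)%:E)%E.
Proof.
move=> x0; suff -> : fstar f (derive1 f x) = (derive1 f x * x - f x)%:E.
  by rewrite -EFinD addrC subrK.
apply/le_anti/andP; split.
  apply: ge_ereal_sup => _ [y /= y0 <-]; rewrite lee_fin.
  by have := convex_tangent x0 y0; lra.
by apply: ereal_sup_ubound; exists x => //=; exact: ltW.
Qed.

Hypothesis f_strictly_convex : strictly_convex_nonneg f.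

(* Both tangents bound [f m] from below at the midpoint [m], strict convexity bounds
   it from above. *)
Lemma ltr_derive1 x y : 0 < x -> x < y -> derive1 f x < derive1 f y.
Proof.
move=> x0 xy; set m := (x + y) / 2.
have m0 : 0 < m by rewrite /m; lra.
have tx := convex_tangent x0 (ltW m0).
have ty := convex_tangent (lt_trans x0 xy) (ltW m0).
have fm : f m < 2^-1 * f y + (1 - 2^-1) * f x.
  rewrite (_ : m = 2^-1 * y + (1 - 2^-1) * x); last by rewrite /m; field.
  apply: f_strictly_convex; rewrite ?ltW ?(lt_trans x0 xy) ?gt_eqF //.
  by rewrite invr_gt0 ltr0n invf_lt1 ?ltr1n.
rewrite -subr_lt0 -(pmulr_llt0 _ (_ : 0 < y - x)); last by rewrite subr_gt0.
move: tx ty; rewrite /m; nra.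
Qed.

Lemma ler_derive1 x y : 0 < x -> 0 < y -> (derive1 f x <= derive1 f y) = (x <= y).
Proof.
move=> x0 y0; case: (ltgtP x y) => [xy|yx|->]; last by rewrite !lexx.
  exact/ltW/ltr_derive1.
by apply/negbTE; rewrite -ltNge ltr_derive1.
Qed.

Lemma is_interval_derive1_pos : is_interval (derive1 f @` [set x | 0 < x]).
Proof.
move=> _ _ [a /= a0 <-] [b /= b0 <-] y /andP[ay yb].
have [<-|ay'] := eqVneq (derive1 f a) y; first by exists a.
have [->|yb'] := eqVneq y (derive1 f b); first by exists b.
have ay_lt : derive1 f a < y by rewrite lt_neqAle ay' ay.
have yb_lt : y < derive1 f b by rewrite lt_neqAle yb' yb.
have ab : a < b by rewrite ltNge -ler_derive1 // -ltNge (lt_trans ay_lt).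
have df x : a <= x <= b -> derivable f x 1.
  by move=> /andP[ax _]; exact/f_derivable/(lt_le_trans a0 ax).
have [c /andP[ac _] <-] := darboux ab df (introT andP (conj ay_lt yb_lt)).
by exists c => //=; exact: lt_trans ac.
Qed.

Lemma fdot_invK x : 0 < x -> fdot_inv f (derive1 f x) = x.
Proof.
move=> x0; rewrite /fdot_inv; case: xgetP => [x' _ [x'0 /eqP]|/(_ x) []//].
by rewrite eq_le !ler_derive1 // => /le_anti.
Qed.

Lemma measurable_fdot_inv : measurable_fun setT (fdot_inv f).
Proof.
apply: (measurability (@RGenCInfty.G R)) => [|_ [_ [r ->] <-]].
  exact: RGenCInfty.measurableE.
rewrite setTI; have [r0|r0] := leP r 0.
  rewrite (_ : _ @^-1` _ = setT) //; apply/seteqP; split => // y _ /=.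
  by rewrite in_itv /= andbT (le_trans r0) ?fdot_inv_ge0.
rewrite (_ : _ @^-1` _ = derive1 f @` [set x | 0 < x] `&` `[derive1 f r, +oo[).
  apply: measurableI; last exact: measurable_itv.
  by apply: is_interval_measurable; exact: is_interval_derive1_pos.
apply/seteqP; split => y /=; rewrite !in_itv /= !andbT.
  move=> ry; have y0 : 0 < fdot_inv f y by exact: lt_le_trans ry.
  split; first by exists (fdot_inv f y) => //; exact: derive1_fdot_inv.
  by rewrite -(derive1_fdot_inv y0) ler_derive1.
by move=> [[x /= x0 <-]]; rewrite fdot_invK // ler_derive1.
Qed.

End convex_derivative.

Section ae_integral_nonmeasurable.
Local Open Scope ereal_scope.
Context d (T : measurableType d) (R : realType).
Variable mu : {measure set T -> \bar R}.
Implicit Types F G : T -> \bar R.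
Import HBNNSimple.

(* Unlike [ae_ge0_le_integral] and [ae_eq_integral], no measurability is assumed: the
   integrand of the theorem involves [fstar] and is not known to be measurable. *)
Lemma ae_ge0_le_integral_nonmeasurable F G :
  (forall x, 0 <= F x) -> (forall x, 0 <= G x) -> {ae mu, forall x, F x <= G x} ->
  \int[mu]_x F x <= \int[mu]_x G x.
Proof.
move=> F0 G0 [N [mN N0 FGN]]; rewrite ge0_integralTE // ge0_integralTE //.
apply: ge_ereal_sup => _ [h /= hF <-].
(* A simple minorant of [F] becomes one of [G] once killed on the null set [N]. *)
pose hN := mul_nnsfun h (indic_nnsfun R (measurableC mN)).
have -> : sintegral mu h = sintegral mu hN.
  rewrite -!integralT_nnsfun; apply: ge0_ae_eq_integral => //.
  - by apply/measurable_EFinP; exact: measurable_funPT.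
  - by apply/measurable_EFinP; exact: measurable_funPT.
  - by move=> x _; rewrite lee_fin.
  - by move=> x _; rewrite lee_fin.
  exists N; split => // x /= /not_implyP[_]; apply: contra_notP => Nx.
  by rewrite /= mindicE mem_set ?mulr1.
apply: ereal_sup_ubound; exists hN => //= x; rewrite /= mindicE.
have [/set_mem xN|_] := boolP (x \in ~` N); last by rewrite mulr0.
rewrite mulr1 (le_trans (hF x)) //.
by apply: contrapT => nFG; exact: xN (FGN x nFG).
Qed.

Lemma ae_eq_integral_nonmeasurable F G :
  {ae mu, forall x, F x = G x} -> \int[mu]_x F x = \int[mu]_x G x.
Proof.
move=> FG; rewrite integralE [RHS]integralE.
have FGp : {ae mu, forall x, F^\+ x = G^\+ x}.
  by apply: filterS FG => x; rewrite !funeposE => ->.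
have FGn : {ae mu, forall x, F^\- x = G^\- x}.
  by apply: filterS FG => x; rewrite !funenegE => ->.
congr (_ - _); apply/le_anti/andP; split; apply: ae_ge0_le_integral_nonmeasurable;
  (exact: funepos_ge0 || exact: funeneg_ge0 ||
   by [apply: filterS FGp => x -> | apply: filterS FGn => x ->]).
Qed.

End ae_integral_nonmeasurable.

Section measure_support.
Context (R : realType) (dim : nat) (Q : {measure set (dim.-tuple R) -> \bar R}).

Definition box (c : dim.-tuple R) (e : R) : set (dim.-tuple R) :=
  [set x | forall i, `|tnth x i - tnth c i| < e].

Definition rat_box (qr : dim.-tuple rat * rat) : set (dim.-tuple R) :=
  box (map_tuple ratr qr.1) (ratr qr.2).

Lemma measurable_box c e : measurable (box c e).
Proof.
rewrite (_ : box c e = \bigcap_(i in [set: 'I_dim])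
    ((fun x : dim.-tuple R => tnth x i) @^-1` `]tnth c i - e, tnth c i + e[)).
  apply: fin_bigcap_measurable => [|i _]; first exact: finite_finset.
  rewrite -[X in measurable X]setTI.
  by apply: measurable_tnth => //; exact: measurable_itv.
apply/seteqP; split => x /= xc i.
  by move=> _; rewrite /= in_itv /= -ltr_distlC distrC.
by have := xc i I; rewrite /= in_itv /= -ltr_distlC distrC.
Qed.

Lemma not_msupp_rat_box th : ~ msupp Q th ->
  exists qr, Q (rat_box qr) = 0%E /\ rat_box qr th.
Proof.
move=> /existsNP[e /not_implyP[e0 /negP]]; rewrite -leNgt => Qe.
have e3 : 0 < e / 3 by rewrite divr_gt0.
have qi i : exists q : rat, `|ratr q - tnth th i| < e / 3.
  have /rat_in_itvoo[q] : tnth th i - e / 3 < tnth th i + e / 3 by lra.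
  by rewrite in_itv /= => qe; exists q; rewrite distrC ltr_distlC.
have /rat_in_itvoo[r] : e / 3 < 2 * e / 3 by lra.
rewrite in_itv /= => /andP[r1 r2].
pose qt := [tuple xchoose (qi i) | i < dim].
have qtE i : `|ratr (tnth qt i) - tnth th i| < e / 3.
  by rewrite tnth_mktuple; exact: xchooseP (qi i).
exists (qt, r); split; last first.
  by move=> i; rewrite tnth_map distrC (lt_trans (qtE i)).
apply/le_anti; rewrite measure_ge0 andbT (le_trans _ Qe) // le_measure ?inE //;
  try exact: measurable_box.
move=> x /= xq i; have := xq i; rewrite tnth_map /= => xqi.
by rewrite (le_lt_trans (ler_distD (ratr (tnth qt i)) _ _)) //; have := qtE i; lra.
Qed.

(* The complement of the support is covered by the countably many null boxes with
   rational centre and radius. *)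
Lemma ae_msupp : \forall th \ae Q, msupp Q th.
Proof.
pose B k : set (dim.-tuple R) := if unpickle k is Some qr then
  if Q (rat_box qr) == 0%E then rat_box qr else set0 else set0.
apply: (@negligibleS _ _ _ _ (\bigcup_k B k)).
  move=> th /not_msupp_rat_box[qr [Q0 qr_th]]; exists (pickle qr) => //.
  by rewrite /B pickleK Q0 eqxx.
apply: negligible_bigcup => k; rewrite /B.
case: (unpickle k) => [qr|]; last exact: negligible_set0.
case: eqP => [Q0|_]; last exact: negligible_set0.
by apply/negligibleP => //; exact: measurable_box.
Qed.

End measure_support.

Section Radon_Nikodym_density.
Local Open Scope ereal_scope.
Context d (T : measurableType d) (R : realType).
Variable mu : {sigma_finite_measure set T -> \bar R}.

Lemma Radon_Nikodym_ge0_ae (nu : {finite_measure set T -> \bar R}) : nu `<< mu ->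
  \forall x \ae mu, 0 <= ('d (charge_of_finite_measure nu) '/d mu) x.
Proof.
move=> numu; apply: filterS (ae_eq_Radon_Nikodym_SigmaFinite numu measurableT) => x.
by move=> /(_ I) <-; exact: Radon_Nikodym_SigmaFinite.f_ge0.
Qed.

Lemma Radon_Nikodym_integrableM (nu : {finite_measure set T -> \bar R}) F :
  nu `<< mu -> nu.-integrable setT F ->
  mu.-integrable setT (F \* 'd (charge_of_finite_measure nu) '/d mu).
Proof.
move=> numu intF; have mF := measurable_int _ intF.
apply/integrableP; split; first exact: emeasurable_funM.
rewrite (ae_eq_integral
  (fun x => `|F x| * ('d (charge_of_finite_measure nu) '/d mu) x)) //.
- rewrite Radon_Nikodym_change_of_variables //; last exact: integrable_abse.
  by case/integrableP: intF.
- by apply: measurableT_comp => //; exact: emeasurable_funM.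
- by apply: emeasurable_funM => //; exact: measurableT_comp.
apply: filterS (Radon_Nikodym_ge0_ae numu) => x rho0 _.
by rewrite /= abseM (gee0_abs rho0).
Qed.

Lemma integrable_EFin_addr (nu : {finite_measure set T -> \bar R}) (L : T -> R) c :
  nu.-integrable setT (EFin \o L) -> nu.-integrable setT (fun x => (L x + c)%:E).
Proof.
move=> intL; have intc := finite_measure_integrable_cst nu c measurableT.
by apply: eq_integrable (integrableD _ intL intc) => // x _; rewrite /= EFinD.
Qed.

Lemma integral_shift_Radon_Nikodym (nu : probability T R) (L : T -> R) c :
  nu `<< mu -> nu.-integrable setT (EFin \o L) ->
  \int[mu]_x ((L x + c)%:E * ('d (charge_of_finite_measure nu) '/d mu) x)
  = \int[nu]_x (L x)%:E + c%:E.
Proof.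
move=> numu intL; have intc := finite_measure_integrable_cst nu c measurableT.
rewrite (Radon_Nikodym_change_of_variables numu measurableT);
  last exact: integrable_EFin_addr.
under eq_integral do rewrite EFinD.
rewrite integralD // integral_cst //; congr (_ + _).
by rewrite -[RHS]mule1; congr (_ * _); exact: probability_setT.
Qed.

End Radon_Nikodym_density.

Section risk_gap.
Context d (T : measurableType d) (R : realType).
Variables (Q Pstar P : probability T R) (f : R -> R) (L g : T -> R) (lam beta : R).
Hypothesis lam_gt0 : 0 < lam.
Hypothesis f_convex : convex_nonneg f.
Hypothesis f_derivable : differentiable_pos f.
Hypothesis g_ge0 : forall x, 0 <= g x.
Hypothesis g_gt0_ae : \forall x \ae Q, 0 < g x.
Hypothesis g_measurable : measurable_fun setT g.
Hypothesis derive1_g : forall x, 0 < g x -> derive1 f (g x) = - (L x + beta) / lam.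
Hypothesis PstarE :
  forall A, measurable A -> Pstar A = (\int[Q]_(x in A) (g x)%:E)%E.
Hypothesis PQ : charge_of_finite_measure P `<< Q.

Let EFin_g_measurable : measurable_fun setT (EFin \o g).
Proof. exact/measurable_EFinP. Qed.

Lemma Pstar_dominated_by_Q : charge_of_finite_measure Pstar `<< Q.
Proof.
apply/null_content_dominatesP => A mA QA0; rewrite /= PstarE //.
by apply: null_set_integral => //; exact: measurable_funTS.
Qed.

Lemma Q_dominated_by_Pstar : Q `<< Pstar.
Proof.
apply/null_content_dominatesP => A mA PA0.
have : ae_eq Q A (EFin \o g) (cst 0%E).
  apply/ae_eq_integral_abs => //; first exact: measurable_funTS.
  by under eq_integral do rewrite gee0_abs ?lee_fin //; rewrite -PstarE.
move=> gA0; have notA : \forall x \ae Q, ~ A x.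
  by apply: filterS2 g_gt0_ae gA0 => x gx0 /[apply] -[gx]; rewrite gx ltxx in gx0.
by apply: measure_negligible => //; apply: negligibleS notA => x Ax; exact.
Qed.

Lemma Radon_Nikodym_Pstar :
  ae_eq Q setT ('d (charge_of_finite_measure Pstar) '/d Q) (EFin \o g).
Proof.
have PstarQ := Pstar_dominated_by_Q.
apply: integral_ae_eq => //; first exact: Radon_Nikodym_integrable.
by move=> E _ mE; rewrite -Radon_Nikodym_integral //; exact: PstarE.
Qed.

Local Notation "'d nu '/d mu" := ('d (charge_of_finite_measure nu) '/d mu)%E.

Lemma risk_gap_integrand_ae : \forall x \ae Q,
  ((1 - ('d P '/d Pstar) x)
     * ((f (fine (('d Pstar '/d Q) x)))%:E + fstar f (- (L x + beta) / lam))
   = lam^-1%:E * ((L x + beta)%:E * ('d P '/d Q) x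
                  - (L x + beta)%:E * ('d Pstar '/d Q) x))%E.
Proof.
have PPstar := null_dominates_trans PQ Q_dominated_by_Pstar.
have chain := Radon_Nikodym_chain_rule PPstar Pstar_dominated_by_Q.
apply: filterS3 g_gt0_ae chain Radon_Nikodym_Pstar => x gx0 /(_ I) -> /(_ I) rhoE.
rewrite rhoE /= -(derive1_g gx0) fenchel_young_derive1 // derive1_g //.
rewrite -[('d P '/d Pstar) x]fineK ?Radon_Nikodym_fin_num // -EFinB -!EFinM; congr EFin.
by field; rewrite gt_eqF.
Qed.

Hypothesis intP : P.-integrable setT (EFin \o L).
Hypothesis intPstar : Pstar.-integrable setT (EFin \o L).

Lemma risk_gap : (\int[P]_x (L x)%:E - \int[Pstar]_x (L x)%:E
  = lam%:E * \int[Q]_x ((1 - ('d P '/d Pstar) x)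
      * ((f (fine (('d Pstar '/d Q) x)))%:E + fstar f (- (L x + beta) / lam))))%E.
Proof.
have intLP := Radon_Nikodym_integrableM PQ (integrable_EFin_addr beta intP).
have intLPstar := Radon_Nikodym_integrableM Pstar_dominated_by_Q
  (integrable_EFin_addr beta intPstar).
rewrite (ae_eq_integral_nonmeasurable risk_gap_integrand_ae) integralZl //; last first.
  exact: integrableB.
rewrite integralB // !integral_shift_Radon_Nikodym //; last exact: Pstar_dominated_by_Q.
have finP : (\int[P]_x (L x)%:E)%E \is a fin_num.
  exact: integrable_fin_num intP.
have finPstar : (\int[Pstar]_x (L x)%:E)%E \is a fin_num.
  exact: integrable_fin_num intPstar.
rewrite -(fineK finP) -(fineK finPstar).
by rewrite -!EFinD -!EFinM; congr EFin; field; rewrite gt_eqF.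
Qed.

End risk_gap.

Theorem theorem4 (R : realType) (dim : nat) (X Y : Type)
  (M : set (dim.-tuple R)) (h : dim.-tuple R -> X -> Y)
  (loss : Y -> Y -> R) (n : nat) (z : 'I_n -> X * Y)
  (Q : probability (dim.-tuple R) R) (lam : R) (f : R -> R) (beta : R)
  (Pstar P : probability (dim.-tuple R) R) :
  let Lz := emp_risk h loss z in
  let g := fun th => fdot_inv f (- (beta + Lz th) / lam) in
  (* setting *)
  measurable M -> Q M = 1%E ->
  (forall y y', 0 <= loss y y') -> (forall y, loss y y = 0) ->
  0 < lam ->
  convex_nonneg f -> f 1 = 0 ->
  (* assumption (a) *)
  strictly_convex_nonneg f -> differentiable_pos f ->
  (* assumption (b), with N_{Q,z}(lam) := beta *)
  (forall th, msupp Q th -> 0 < g th) ->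
  (\int[Q]_th (g th)%:E = 1)%E ->
  (* Pstar = P^{(Q,lam)}_{Theta|Z=z}, given by its density g w.r.t. Q *)
  (forall A, measurable A -> Pstar A = \int[Q]_(th in A) (g th)%:E)%E ->
  (* P in triangle_Q(M) *)
  charge_of_finite_measure P `<< Q ->
  (* the risks R_z(P), R_z(Pstar) are (finite) real numbers *)
  P.-integrable setT (EFin \o Lz) -> Pstar.-integrable setT (EFin \o Lz) ->
  (\int[P]_th (Lz th)%:E - \int[Pstar]_th (Lz th)%:E
   = lam%:E * \int[Q]_th
       ((1 - ('d (charge_of_finite_measure P) '/d Pstar) th)
        * ((f (fine (('d (charge_of_finite_measure Pstar) '/d Q) th)))%:E
           + fstar f (- (Lz th + beta) / lam))))%E.
Proof.
move=> Lz g _ _ _ _ lam0 cvx _ scvx df g_supp _ PstarE PQ intP intPstar.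
have mLz : measurable_fun setT Lz by apply/measurable_EFinP; exact: measurable_int intP.
apply: (risk_gap (g := g) lam0 cvx df) => //.
- by move=> th; exact: fdot_inv_ge0.
- exact: filterS g_supp (ae_msupp Q).
- apply: measurableT_comp (measurable_fdot_inv cvx df scvx) _.
  by apply: measurable_funM => //; apply: measurable_funN; exact: measurable_funD.
- by move=> th gth; rewrite derive1_fdot_inv // addrC.
Qed.
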